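(* Assume the walk's transition probabilities $p$ are non-reversible: there do not exist $m_V:\tilde V\to\mathbb{R}$, not identically zero, and $m_E:\tilde E\to\mathbb{R}$ with $p(a)m_V(o(a))=p(\bar a)m_V(t(a))=m_E(|a|)$ for all $a\in\tilde A$. Let $\Psi_\infty$ be the stationary state, and set $$\boldsymbol{\alpha}_{in}=[\Psi_\infty(e_1),\dots,\Psi_\infty(e_r)]^\top,\qquad \boldsymbol{\beta}_{out}=[\Psi_\infty(\bar e_1),\dots,\Psi_\infty(\bar e_r)]^\top.$$ Then $\boldsymbol{\beta}_{out}=-\boldsymbol{\alpha}_{in}$. Moreover: 1. $\sum_{a\in\tilde A:\,t(a)=u}\sqrt{p(\bar a)}\,\Psi_\infty(a)=0$ for every $u\in\tilde V$; 2. $\Psi_\infty(\bar a)=-\Psi_\infty(a)$ for every $a\in\tilde A$; 3. $\Psi_\infty$ is orthogonal to $\ker(1-\chi^*E_{PON}\chi)$. That is, for every $\varphi:\tilde A\to\mathbb{C}$ with $\varphi=\chi^*E_{PON}\chi\varphi$, we have $\sum_{a\in\tilde A}\overline{\varphi(a)}\Psi_\infty(a)=0$. Such $\varphi$ is supported on $A_0$, so the sum is finite.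
   Context: **Symmetric directed graphs.** A symmetric directed graph $(V,A)$ has the following structure. - Each arc $a$ has an origin $o(a)$ and a terminus $t(a)$. - Each arc $a$ has an inverse arc $\bar a$ with $o(\bar a)=t(a)$, $t(\bar a)=o(a)$ and $\bar{\bar a}=a$. - $|a|=|\bar a|$ denotes the undirected edge. **The tailed graph.** - Let $G_0=(V_0,A_0)$ be a finite symmetric directed graph and let $r\ge1$. - For $j=1,\dots,r$, let $\mathbb{P}_j$ be a semi-infinite path (''tail'') with vertices $v^j_0,v^j_1,\dots$ and arcs $A(\mathbb{P}_j)$ in both directions between consecutive vertices. - The end vertex is $o(\mathbb{P}_j)=v^j_0$. We require $V(\mathbb{P}_j)\cap V_0=\{o(\mathbb{P}_j)\}$, and distinct tails share no vertices outside $V_0$. - Let $\tilde G=(\tilde V,\tilde A)=G_0\cup\bigcup_j\mathbb{P}_j$, with undirected edge set $\tilde E$. - Let $e_j$ be the arc from $v^j_1$ to $o(\mathbb{P}_j)$. **Transition probabilities.** Let $p:\tilde A\to(0,1]$ satisfy: - $\sum_{o(a)=u}p(a)=1$ for all $u\in\tilde V$; - $p(a)=1/2$ on $\bigcup_jA(\mathbb{P}_j)\setminus\{\bar e_1,\dots,\bar e_r\}$. **Szegedy walk.** For $\Psi:\tilde A\to\mathbb{C}$, $$(U\Psi)(a)=\sum_{b:\,t(b)=o(a)}\big(2\sqrt{p(a)p(\bar b)}-\delta_{\bar a,b}\big)\Psi(b).$$ **Restriction operators.** - $\chi:\mathbb{C}^{\tilde A}\to\mathbb{C}^{A_0}$ is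 restriction to $A_0$. - $\chi^*$ is extension by zero. - $E_{PON}=\chi U\chi^*$, the restriction of $U$ to $A_0$. **Initial state and stationary state.** Fix $\alpha_1,\dots,\alpha_r\in\mathbb{C}$. - $\Psi_0(a)=\alpha_j$ for $a\in A(\mathbb{P}_j)$ with $\mathrm{dist}(o(\mathbb{P}_j),t(a))<\mathrm{dist}(o(\mathbb{P}_j),o(a))$. - $\Psi_0(a)=0$ otherwise. - Set $\Psi_{n+1}=U\Psi_n$. - The pointwise limit $\Psi_\infty=\lim_n\Psi_n$ exists (known fact) and is called the stationary state. *)

From HB Require Import structures.
From mathcomp Require Import all_boot all_order all_algebra.
From mathcomp Require Import complex.
From mathcomp Require Import all_classical all_reals topology normedtype sequences.

Set Implicit Arguments.
Unset Strict Implicit.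
Unset Printing Implicit Defensive.

Import Order.TTheory GRing.Theory Num.Theory.
Import numFieldNormedType.Exports.
Local Open Scope ring_scope.

(* The tailed graph  G~ = G_0 ∪ P_1 ∪ ... ∪ P_r.                            *)
(* G_0 : finite vertex type V0, finite arc type A0, origin o0, terminus t0, *)
(* inverse inv0.  Tail j is attached at the vertex att j = o(P_j) of V0.    *)
(* Vertices of G~ :  VIn v        = v ∈ V0                                   *)
(*                   VTail j n    = v^j_{n+1}   (n : nat)                    *)
(* Arcs of G~     :  AIn a        = a ∈ A0                                   *)
(*                   AOut j n     = arc v^j_n -> v^j_{n+1}  (outward)        *)
(*                   AInw j n     = arc v^j_{n+1} -> v^j_n  (inward)         *)
(* so  e_j = AInw j 0  and  \bar e_j = AOut j 0.                            *)

(* R[i] (R real closed) is a numClosedFieldType; equip it with the standard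
   metric topology of a numFieldType (the one induced by the modulus |z|),
   as MathComp-Analysis does generically for every numFieldType R via R^o. *)
HB.instance Definition _ (R : rcfType) :=
  PseudoPointedMetric.copy R[i] (R[i] : numFieldType)^o.

Inductive tvert (V0 : Type) (r : nat) : Type :=
  | VIn of V0
  | VTail of 'I_r & nat.

Inductive tarc (A0 : Type) (r : nat) : Type :=
  | AIn of A0
  | AOut of 'I_r & nat
  | AInw of 'I_r & nat.

Arguments VIn {V0 r}.
Arguments VTail {V0 r}.
Arguments AIn {A0 r}.
Arguments AOut {A0 r}.
Arguments AInw {A0 r}.

Section TarcEq.
Variables (A0 : eqType) (r : nat).
Definition tarc_to (a : tarc A0 r) : A0 + ('I_r * nat) + ('I_r * nat) :=
  match a with
  | AIn b => inl (inl b)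
  | AOut j n => inl (inr (j, n))
  | AInw j n => inr (j, n)
  end.
Definition tarc_of (x : A0 + ('I_r * nat) + ('I_r * nat)) : tarc A0 r :=
  match x with
  | inl (inl b) => AIn b
  | inl (inr (j, n)) => AOut j n
  | inr (j, n) => AInw j n
  end.
Lemma tarc_toK : cancel tarc_to tarc_of. Proof. by case. Qed.
End TarcEq.
HB.instance Definition _ (A0 : eqType) (r : nat) :=
  Equality.copy (tarc A0 r) (can_type (@tarc_toK A0 r)).

Section TvertEq.
Variables (V0 : eqType) (r : nat).
Definition tvert_to (v : tvert V0 r) : V0 + ('I_r * nat) :=
  match v with VIn x => inl x | VTail j n => inr (j, n) end.
Definition tvert_of (x : V0 + ('I_r * nat)) : tvert V0 r :=
  match x with inl x => VIn x | inr (j, n) => VTail j n end.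
Lemma tvert_toK : cancel tvert_to tvert_of. Proof. by case. Qed.
End TvertEq.
HB.instance Definition _ (V0 : eqType) (r : nat) :=
  Equality.copy (tvert V0 r) (can_type (@tvert_toK V0 r)).

Section TailedGraph.
Variables (V0 A0 : finType) (o0 t0 : A0 -> V0) (inv0 : A0 -> A0)
          (r : nat) (att : 'I_r -> V0).

Local Notation vert := (tvert V0 r).
Local Notation arc := (tarc A0 r).

(* the vertex v^j_n of the tail P_j (v^j_0 = o(P_j) = att j) *)
Definition tailv (j : 'I_r) (n : nat) : vert :=
  if n is n'.+1 then VTail j n' else VIn (att j).

Definition aorg (a : arc) : vert :=
  match a with
  | AIn b => VIn (o0 b)
  | AOut j n => tailv j n
  | AInw j n => tailv j n.+1
  end.

Definition ater (a : arc) : vert :=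
  match a with
  | AIn b => VIn (t0 b)
  | AOut j n => tailv j n.+1
  | AInw j n => tailv j n
  end.

Definition ainv (a : arc) : arc :=
  match a with
  | AIn b => AIn (inv0 b)
  | AOut j n => AInw j n
  | AInw j n => AOut j n
  end.

Definition e_ (j : 'I_r) : arc := AInw j 0.

Definition is_tail_arc (a : arc) : bool :=
  if a is AIn _ then false else true.

Definition inarcs (u : vert) : seq arc :=
  match u with
  | VIn v => [seq AIn b | b <- enum A0 & t0 b == v]
             ++ [seq AInw j 0 | j <- enum 'I_r & att j == v]
  | VTail j n => [:: AOut j n; AInw j n.+1]
  end.

Definition outarcs (u : vert) : seq arc :=
  match u with
  | VIn v => [seq AIn b | b <- enum A0 & o0 b == v]
             ++ [seq AOut j 0 | j <- enum 'I_r & att j == v]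
  | VTail j n => [:: AOut j n.+1; AInw j n]
  end.

Lemma mem_inarcs (u : vert) (a : arc) : (a \in inarcs u) = (ater a == u).
Proof.
case: u => [v|j n]; case: a => [b|k m|k m] /=; apply/idP/eqP.
- rewrite mem_cat => /orP[/mapP[b' + [->]]|/mapP[? _ //]].
  by rewrite mem_filter => /andP[/eqP ->].
- move=> [<-]; rewrite mem_cat; apply/orP; left; apply/mapP; exists b => //.
  by rewrite mem_filter eqxx mem_enum.
- by rewrite mem_cat; apply/negP => /eqP/orP[/mapP[? _ //]|/mapP[? _ //]].
- rewrite mem_cat => /orP[/mapP[? _ //]|/mapP[k' + E]].
  by case: E => -> -> /=; rewrite mem_filter => /andP[/eqP ->].
- case: m => //= -[<-]; rewrite mem_cat; apply/orP; right; apply/mapP; exists k => //.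
  by rewrite mem_filter eqxx mem_enum.
- by rewrite !inE.
- by rewrite !inE => /orP[/eqP[-> ->]|/eqP[]].
- by move=> [-> ->]; rewrite inE eqxx.
- by rewrite !inE => /orP[/eqP[]|/eqP[-> ->]].
- by case: m => // m [-> ->]; rewrite !inE eqxx orbT.
Qed.

Lemma mem_outarcs (u : vert) (a : arc) : (a \in outarcs u) = (aorg a == u).
Proof.
case: u => [v|j n]; case: a => [b|k m|k m] /=; apply/idP/eqP.
- rewrite mem_cat => /orP[/mapP[b' + [->]]|/mapP[? _ //]].
  by rewrite mem_filter => /andP[/eqP ->].
- move=> [<-]; rewrite mem_cat; apply/orP; left; apply/mapP; exists b => //.
  by rewrite mem_filter eqxx mem_enum.
- rewrite mem_cat => /orP[/mapP[? _ //]|/mapP[k' + E]].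
  by case: E => -> -> /=; rewrite mem_filter => /andP[/eqP ->].
- case: m => //= -[<-]; rewrite mem_cat; apply/orP; right; apply/mapP; exists k => //.
  by rewrite mem_filter eqxx mem_enum.
- by rewrite mem_cat; apply/negP => /eqP/orP[/mapP[? _ //]|/mapP[? _ //]].
- by rewrite !inE.
- by rewrite !inE => /orP[/eqP[-> ->]|/eqP[]].
- by case: m => // m [-> ->]; rewrite inE eqxx.
- by rewrite !inE => /orP[/eqP[]|/eqP[-> ->]].
- by move=> [-> ->]; rewrite !inE eqxx orbT.
Qed.

Lemma inarcs_uniq (u : vert) : uniq (inarcs u).
Proof.
case: u => [v|j n] /=; last by [].
rewrite cat_uniq !map_inj_uniq ?filter_uniq //; first last.
- by move=> ? ? [].
- by move=> ? ? [].
- by rewrite -enumT enum_uniq.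
- by rewrite -enumT enum_uniq.
rewrite andbT; apply/hasPn => a /mapP[? _ ->]; apply/negP => /mapP[? _ //].
Qed.

Lemma outarcs_uniq (u : vert) : uniq (outarcs u).
Proof.
case: u => [v|j n] /=; last by [].
rewrite cat_uniq !map_inj_uniq ?filter_uniq //; first last.
- by move=> ? ? [].
- by move=> ? ? [].
- by rewrite -enumT enum_uniq.
- by rewrite -enumT enum_uniq.
rewrite andbT; apply/hasPn => a /mapP[? _ ->]; apply/negP => /mapP[? _ //].
Qed.

Lemma aorg_ainv : (forall b, o0 (inv0 b) = t0 b) -> forall a, aorg (ainv a) = ater a.
Proof. by move=> H [b|k m|k m] //=; rewrite H. Qed.

Lemma ainvK : (forall b, inv0 (inv0 b) = b) -> forall a, ainv (ainv a) = a.
Proof. by move=> H [b|k m|k m] //=; rewrite H. Qed.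

Variable R : realType.
Local Notation C := R[i].
Variable p : arc -> R.

Definition Uop (Psi : arc -> C) (a : arc) : C :=
  \sum_(b <- inarcs (aorg a))
     (real_complex R (2 * Num.sqrt (p a * p (ainv b))) - (if ainv a == b then 1 else 0)) * Psi b.

Definition chi (Psi : arc -> C) : A0 -> C := fun a => Psi (AIn a).
Definition chistar (f : A0 -> C) : arc -> C :=
  fun a => if a is AIn b then f b else 0.
Definition E_PON (f : A0 -> C) : A0 -> C := chi (Uop (chistar f)).

Definition Psi0 (alpha : 'I_r -> C) (a : arc) : C :=
  if a is AInw j _ then alpha j else 0.

Definition Psi_n (alpha : 'I_r -> C) (n : nat) : arc -> C :=
  iter n Uop (Psi0 alpha).

End TailedGraph.

From HB Require Import structures.
From mathcomp Require Import all_boot all_order all_algebra.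
From mathcomp Require Import complex ring.
From mathcomp Require Import all_classical all_reals topology normedtype sequences.
Import Order.TTheory GRing.Theory Num.Theory.
Import numFieldNormedType.Exports.
Local Open Scope classical_set_scope.
Local Open Scope ring_scope.

(* A fixed point Psi of U satisfies Psi(a) + Psi(bar a) = 2 sqrt(p a) F(o a), where
   F(u) = sum_{t b = u} sqrt(p (bar b)) Psi(b).  Reading this at a and at bar a gives the
   balance sqrt(p a) F(o a) = sqrt(p (bar a)) F(t a), so |F|^2 is a reversible measure
   unless F = 0: non-reversibility forces F = 0, hence Psi(bar a) = - Psi(a).  The
   stationary state is such a fixed point.
   An element phi of ker(1 - chi^* E_PON chi) is a fixed point of U only on A_0.  Computing
   sum_b |phi(b) + phi(bar b)|^2 once from the origins and once from the termini shows that
   F vanishes at every vertex leaking probability into a tail, so the balance also holds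
   on the tails and again F = 0 and phi is antisymmetric.  Then the pairing
   sum_{b in A_0} conj(phi b) Psi_n(b) is preserved by U, vanishes for Psi_0, and passes
   to the limit. *)

Set Implicit Arguments.
Unset Strict Implicit.

Section ComplexLimits.
Variable R : realType.
Local Notation C := R[i].

Lemma cvgC_unique (u : nat -> C) (a b : C) :
  u n @[n --> \oo] --> a -> u n @[n --> \oo] --> b -> a = b.
Proof. exact/cvg_unique/(@norm_hausdorff _ (C : numFieldType)^o). Qed.

Lemma cvgC_lincomb (T : Type) (s : seq T) (c : T -> C) (u : nat -> T -> C) (l : T -> C) :
  (forall b, u n b @[n --> \oo] --> l b) ->
  \sum_(b <- s) c b * u n b @[n --> \oo] --> \sum_(b <- s) c b * l b.
Proof.
move=> cvg_u; apply: (@cvg_big (C : numFieldType)^o) => // [|b _].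
- exact: add_continuous.
- exact/(@cvgMl_tmp (C : numFieldType) _ _ _ (u ^~ b))/cvg_u.
Qed.

Lemma conj_real_complex (a : R) : (real_complex R a)^* = real_complex R a.
Proof. by apply: conj_Creal; rewrite complex_real. Qed.

End ComplexLimits.

Section SymmetricGraph.
Variables (V0 A0 : finType) (o0 t0 : A0 -> V0) (inv0 : A0 -> A0).
Hypotheses (inv0K : involutive inv0) (o0_inv : forall b, o0 (inv0 b) = t0 b).
Variables (R : realType) (s : A0 -> R).
Local Notation C := R[i].
Local Notation rc := (real_complex R).

Definition inflow0 (x : A0 -> C) (v : V0) : C :=
  \sum_(b | t0 b == v) rc (s (inv0 b)) * x b.

Lemma inflow0_conj (x : A0 -> C) v :
  inflow0 (fun b => (x b)^*) v = (inflow0 x v)^*.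
Proof.
by rewrite /inflow0 rmorph_sum; apply: eq_bigr => b _; rewrite rmorphM /= conj_real_complex.
Qed.

Lemma sum_norm_symmetrization (x : A0 -> C) :
  \sum_b `|x b + x (inv0 b)| ^+ 2 = 2 * \sum_b x b * (x b + x (inv0 b))^*.
Proof.
under eq_bigr => b _ do rewrite normCKC mulrDr.
rewrite big_split /= [X in _ + X](reindex_inj (can_inj inv0K)) /=.
under [X in _ + X]eq_bigr => b _ do rewrite inv0K [x (inv0 b) + _]addrC.
by rewrite mulr_natl mulr2n; congr (_ + _); apply: eq_bigr => b _; rewrite mulrC.
Qed.

Lemma leak_energy_eq0 (P : V0 -> R) (x : A0 -> C) :
  (forall v, \sum_(b | o0 b == v) s b ^+ 2 + P v = 1) ->
  (forall b, x b + x (inv0 b) = 2 * (rc (s b) * inflow0 x (o0 b))) ->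
  \sum_v rc (P v) * `|inflow0 x v| ^+ 2 = 0.
Proof.
move=> s_out x_sym; set Y := inflow0 x.
have x_symt b : x b + x (inv0 b) = 2 * (rc (s (inv0 b)) * Y (t0 b)).
  by rewrite -o0_inv -x_sym inv0K addrC.
have E1 : \sum_b `|x b + x (inv0 b)| ^+ 2 = 4 * \sum_v rc (1 - P v) * `|Y v| ^+ 2.
  under eq_bigr => b _ do rewrite x_sym !normrM !exprMn.
  rewrite (partition_big o0 xpredT) //= mulr_sumr; apply: eq_bigr => v _.
  rewrite -(s_out v) addrK rmorph_sum mulr_suml mulr_sumr; apply: eq_bigr => b /eqP <-.
  rewrite normr_nat real_normK ?complex_real // rmorphXn /=.
  by rewrite [2 ^+ 2]expr2 -natrM mulrA.
have E2 : \sum_b `|x b + x (inv0 b)| ^+ 2 = 4 * \sum_v `|Y v| ^+ 2.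
  rewrite sum_norm_symmetrization.
  under eq_bigr => b _ do rewrite x_symt !rmorphM /= conjC_nat conj_real_complex.
  rewrite (partition_big t0 xpredT) //= [RHS]mulr_sumr mulr_sumr; apply: eq_bigr => v _.
  rewrite normCK {1}/Y /inflow0 mulr_suml !mulr_sumr; apply: eq_bigr => b /eqP ->.
  ring.
have four_neq0 : (4 : C) != 0 by rewrite pnatr_eq0.
have := mulfI four_neq0 (etrans (esym E1) E2).
under eq_bigr => v _ do rewrite rmorphB rmorph1 mulrBl mul1r.
by rewrite sumrB => /eqP; rewrite -subr_eq0 addrAC subrr add0r oppr_eq0 => /eqP.
Qed.

Lemma leak_inflow0_eq0 (P : V0 -> R) (x : A0 -> C) :
  (forall v, 0 <= P v) ->
  (forall v, \sum_(b | o0 b == v) s b ^+ 2 + P v = 1) ->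
  (forall b, x b + x (inv0 b) = 2 * (rc (s b) * inflow0 x (o0 b))) ->
  forall v, 0 < P v -> inflow0 x v = 0.
Proof.
move=> P_ge0 s_out x_sym v P_gt0; apply/eqP.
have terms_ge0 u : true -> 0 <= rc (P u) * `|inflow0 x u| ^+ 2.
  by rewrite mulr_ge0 ?exprn_ge0 // ler0c.
have /eqP := psumr_eq0P terms_ge0 (leak_energy_eq0 s_out x_sym) (i := v) isT.
by rewrite mulf_eq0 expf_eq0 normr_eq0 (negPf (lt0r_neq0 _)) ?ltcR.
Qed.

Lemma outflow0_antisym (c : A0 -> C) v :
  (forall b, c (inv0 b) = - c b) ->
  \sum_(b | o0 b == v) rc (s b) * c b = - inflow0 c v.
Proof.
move=> c_anti; rewrite (reindex_inj (can_inj inv0K)) /= /inflow0 -sumrN.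
by apply: eq_big => [b|b _]; rewrite ?o0_inv // c_anti mulrN.
Qed.

Lemma antisym_pairing_step (c : A0 -> C) (F : V0 -> C) (y : A0 -> C) :
  (forall b, c (inv0 b) = - c b) -> (forall v, inflow0 c v = 0) ->
  \sum_b c b * (2 * (rc (s b) * F (o0 b)) - y (inv0 b)) = \sum_b c b * y b.
Proof.
move=> c_anti c_div0; under eq_bigr => b _ do rewrite mulrBr.
rewrite sumrB.
have -> : \sum_b c b * (2 * (rc (s b) * F (o0 b))) = 0.
  rewrite (partition_big o0 xpredT) //=; apply: big1 => v _.
  rewrite (eq_bigr (fun b => 2 * F v * (rc (s b) * c b))) => [|b /eqP <-]; last by ring.
  by rewrite -mulr_sumr outflow0_antisym // c_div0 oppr0 mulr0.
rewrite sub0r (reindex_inj (can_inj inv0K)) /= -sumrN.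
by apply: eq_bigr => b _; rewrite inv0K c_anti mulNr opprK.
Qed.

End SymmetricGraph.

Section TailedWalk.
Variables (V0 A0 : finType) (o0 t0 : A0 -> V0) (inv0 : A0 -> A0).
Variables (r : nat) (att : 'I_r -> V0).
Hypotheses (inv0K : involutive inv0) (o0_inv : forall b, o0 (inv0 b) = t0 b).
Variables (R : realType) (p : tarc A0 r -> R).
Hypothesis p_gt0 : forall a, 0 < p a.

Local Notation C := R[i].
Local Notation vert := (tvert V0 r).
Local Notation arc := (tarc A0 r).
Local Notation o := (aorg o0 att).
Local Notation t := (ater t0 att).
Local Notation inv := (ainv inv0).
Local Notation U := (Uop o0 t0 inv0 att p).
Local Notation Psi_ alpha n := (Psi_n o0 t0 inv0 att p alpha n).
Local Notation sqrtp0 := (fun b => Num.sqrt (p (AIn b))).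

Definition sqp (a : arc) : C := real_complex R (Num.sqrt (p a)).

Definition inflow (Psi : arc -> C) (u : vert) : C :=
  \sum_(b <- inarcs t0 att u) sqp (inv b) * Psi b.

Definition balanced (G : vert -> C) : Prop :=
  forall a, sqp a * G (o a) = sqp (inv a) * G (t a).

Definition reversible : Prop :=
  exists (mV : vert -> R) (mE : arc -> R),
    (exists v, mV v != 0) /\
    (forall a, mE (inv a) = mE a) /\
    (forall a, p a * mV (o a) = p (inv a) * mV (t a) /\ p (inv a) * mV (t a) = mE a).

Definition A0_supported (Psi : arc -> C) : Prop :=
  forall a, is_tail_arc a -> Psi a = 0.

Definition PON_invariant (phi : arc -> C) : Prop :=
  phi = chistar (E_PON o0 t0 inv0 att p (chi phi)).

Lemma ater_ainv a : t (inv a) = o a.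
Proof. by rewrite -(aorg_ainv att o0_inv (inv a)) (ainvK inv0K). Qed.

Lemma UopE (Psi : arc -> C) a :
  U Psi a = 2 * (sqp a * inflow Psi (o a)) - Psi (inv a).
Proof.
rewrite /Uop /inflow; under eq_bigr => b _ do rewrite mulrBl.
rewrite sumrB !mulr_sumr; congr (_ - _).
  by apply: eq_bigr => b _; rewrite sqrtrM ?ltW // !rmorphM rmorph_nat /sqp /= !mulrA.
rewrite (bigD1_seq (inv a)) ?inarcs_uniq ?mem_inarcs ?ater_ainv //= eqxx mul1r.
by rewrite big1 ?addr0 // => b; rewrite eq_sym => /negPf ->; rewrite mul0r.
Qed.

Lemma Uop_fix_balanced (Psi : arc -> C) a :
  U Psi a = Psi a -> U Psi (inv a) = Psi (inv a) ->
  sqp a * inflow Psi (o a) = sqp (inv a) * inflow Psi (t a).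
Proof.
rewrite !UopE (ainvK inv0K) (aorg_ainv att o0_inv) => /eqP + /eqP.
rewrite !subr_eq => /eqP Ea /eqP Eb; apply: (@mulfI _ 2); first by rewrite pnatr_eq0.
by rewrite Ea Eb addrC.
Qed.

Lemma Uop_fix_antisym (Psi : arc -> C) a :
  U Psi a = Psi a -> inflow Psi (o a) = 0 -> Psi (inv a) = - Psi a.
Proof. by rewrite UopE => <- ->; rewrite !mulr0 sub0r opprK. Qed.

Lemma sqp_normK a : `|sqp a| ^+ 2 = real_complex R (p a).
Proof.
by rewrite real_normK ?complex_real // -rmorphXn sqr_sqrtr ?ltW.
Qed.

Lemma nonreversible_balanced_eq0 (G : vert -> C) :
  ~ reversible -> balanced G -> forall u, G u = 0.
Proof.
move=> nonrev G_bal u; apply/eqP/negPn/negP => Gu_neq0; apply: nonrev.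
pose mV v := complex.Re (`|G v| ^+ 2).
have mVE v : real_complex R (mV v) = `|G v| ^+ 2.
  by rewrite RRe_real // realX ?normr_real.
have mV_bal a : p a * mV (o a) = p (inv a) * mV (t a).
  by apply: complexI; rewrite !rmorphM /= !mVE -!sqp_normK -!exprMn -!normrM G_bal.
exists mV, (fun a => p a * mV (o a)); split; [|split].
- by exists u; rewrite -(inj_eq (@complexI R)) mVE rmorph0 expf_eq0 normr_eq0.
- by move=> a; rewrite (aorg_ainv att o0_inv) -mV_bal.
- by move=> a; rewrite -mV_bal.
Qed.

Lemma inflow_VTail (Psi : arc -> C) j n :
  A0_supported Psi -> inflow Psi (VTail j n) = 0.
Proof. by move=> Psi0; rewrite /inflow /= big_cons big_seq1 !Psi0 // !mulr0 addr0. Qed.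

Lemma inflow_VIn (Psi : arc -> C) v :
  A0_supported Psi -> inflow Psi (VIn v) = inflow0 t0 inv0 sqrtp0 (chi Psi) v.
Proof.
move=> Psi0; rewrite /inflow /= big_cat /= !big_map !big_filter.
rewrite [X in _ + X]big1 ?addr0 => [|j _]; last by rewrite Psi0 ?mulr0.
by rewrite big_enum_cond.
Qed.

Lemma outarcs_VIn_sum v :
  \sum_(a <- outarcs o0 att (VIn v)) p a =
  \sum_(b | o0 b == v) p (AIn b) + \sum_(j | att j == v) p (AOut j 0).
Proof. by rewrite /= big_cat /= !big_map !big_filter !big_enum_cond. Qed.

Lemma PON_invariant_supported phi : PON_invariant phi -> A0_supported phi.
Proof. by move=> ->; case. Qed.

Lemma PON_invariant_Uop_fix phi :
  PON_invariant phi -> forall b, U phi (AIn b) = phi (AIn b).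
Proof.
move=> phiE b; have phi0 := PON_invariant_supported phiE.
have chiK : chistar (chi phi) = phi.
  by apply: funext => -[b'|j n|j n] //=; rewrite phi0.
by rewrite {2}phiE /= /E_PON /chi chiK.
Qed.

Hypothesis p_out : forall u, \sum_(a <- outarcs o0 att u) p a = 1.

Lemma PON_invariant_inflow_att phi j :
  PON_invariant phi -> inflow phi (VIn (att j)) = 0.
Proof.
move=> phiE; have phi0 := PON_invariant_supported phiE.
pose P v := \sum_(k | att k == v) p (AOut k 0).
have P_ge0 v : 0 <= P v by rewrite sumr_ge0 // => k _; rewrite ltW.
rewrite inflow_VIn //; apply: (leak_inflow0_eq0 inv0K o0_inv P_ge0).
- move=> v; rewrite -(p_out (VIn v)) outarcs_VIn_sum; congr (_ + _).
  by apply: eq_bigr => b _; rewrite sqr_sqrtr ?ltW.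
- move=> b; rewrite -inflow_VIn // /chi.
  by rewrite -[X in X + _](PON_invariant_Uop_fix phiE) UopE subrK.
- rewrite /P (bigD1 j) //= ltr_wpDr //.
  by rewrite sumr_ge0 // => k _; rewrite ltW.
Qed.

Lemma PON_invariant_balanced phi : PON_invariant phi -> balanced (inflow phi).
Proof.
move=> phiE; have phi0 := PON_invariant_supported phiE.
have tail0 j n : inflow phi (tailv att j n) = 0.
  by case: n => [|n]; [exact: PON_invariant_inflow_att | exact: inflow_VTail].
case=> [b|j n|j n].
- exact: Uop_fix_balanced (PON_invariant_Uop_fix phiE b) (PON_invariant_Uop_fix phiE (inv0 b)).
- by rewrite !tail0 !mulr0.
- by rewrite !tail0 !mulr0.
Qed.

Lemma Psi_n_pairing_eq0 alpha (c : A0 -> C) :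
  (forall b, c (inv0 b) = - c b) -> (forall v, inflow0 t0 inv0 sqrtp0 c v = 0) ->
  forall n, \sum_b c b * Psi_ alpha n (AIn b) = 0.
Proof.
move=> c_anti c_div0; elim=> [|n IHn]; first by apply: big1 => b _; rewrite mulr0.
have PsiS : Psi_ alpha n.+1 = U (Psi_ alpha n) by [].
rewrite -[RHS]IHn; under eq_bigr => b _ do rewrite PsiS UopE.
exact: (antisym_pairing_step inv0K o0_inv (fun v => inflow (Psi_ alpha n) (VIn v))
          (fun b => Psi_ alpha n (AIn b)) c_anti c_div0).
Qed.

Lemma stationary_Uop_fix alpha (Psi_inf : arc -> C) :
  (forall a, Psi_ alpha n a @[n --> \oo] --> Psi_inf a) ->
  forall a, U Psi_inf a = Psi_inf a.
Proof.
move=> cvg_Psi a; apply: (@cvgC_unique _ (fun n => Psi_ alpha n.+1 a)).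
- exact: cvgC_lincomb.
- by have := cvg_Psi a; rewrite -cvg_shiftS.
Qed.

Lemma stationary_pairing_eq0 alpha (Psi_inf : arc -> C) (c : A0 -> C) :
  (forall a, Psi_ alpha n a @[n --> \oo] --> Psi_inf a) ->
  (forall b, c (inv0 b) = - c b) -> (forall v, inflow0 t0 inv0 sqrtp0 c v = 0) ->
  \sum_b c b * Psi_inf (AIn b) = 0.
Proof.
move=> cvg_Psi c_anti c_div0.
apply: (cvgC_unique (cvgC_lincomb (s := index_enum A0) (c := c)
  (u := fun n b => Psi_ alpha n (AIn b)) (fun b => cvg_Psi (AIn b)))).
under eq_cvg do rewrite Psi_n_pairing_eq0 //.
exact: cvg_cst.
Qed.

End TailedWalk.

Theorem theorem3p5
  (V0 A0 : finType) (o0 t0 : A0 -> V0) (inv0 : A0 -> A0)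
  (r : nat) (att : 'I_r -> V0) (R : realType) (p : tarc A0 r -> R)
  (alpha : 'I_r -> R[i]) (Psi_inf : tarc A0 r -> R[i]) :
  (* G_0 is a finite symmetric directed graph; r >= 1 tails *)
  (forall a, inv0 (inv0 a) = a) ->
  (forall a, inv0 a != a) ->
  (forall a, o0 (inv0 a) = t0 a) ->
  (0 < r)%N ->
  (* transition probabilities p : A~ -> (0,1] *)
  (forall a, 0 < p a <= 1) ->
  (forall u, \sum_(a <- outarcs o0 att u) p a = 1) ->
  (forall a, is_tail_arc a ->
     (forall j, a != ainv inv0 (e_ A0 j)) -> p a = 2^-1) ->
  (* non-reversibility *)
  ~ (exists (mV : tvert V0 r -> R) (mE : tarc A0 r -> R),
       (exists v, mV v != 0) /\
       (forall a, mE (ainv inv0 a) = mE a) /\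
       (forall a, p a * mV (aorg o0 att a) = p (ainv inv0 a) * mV (ater t0 att a)
                  /\ p (ainv inv0 a) * mV (ater t0 att a) = mE a)) ->
  (* Psi_inf is the stationary state: pointwise limit of U^n Psi_0 *)
  (forall a, Psi_n o0 t0 inv0 att p alpha n a @[n --> \oo] --> Psi_inf a) ->
  (* beta_out = - alpha_in *)
  (forall j, Psi_inf (ainv inv0 (e_ A0 j)) = - Psi_inf (e_ A0 j)) /\
  (* 1. *)
  (forall u, \sum_(a <- inarcs t0 att u)
               real_complex R (Num.sqrt (p (ainv inv0 a))) * Psi_inf a = 0) /\
  (* 2. *)
  (forall a, Psi_inf (ainv inv0 a) = - Psi_inf a) /\
  (* 3. orthogonality to ker(1 - chi^* E_PON chi) *)
  (forall phi : tarc A0 r -> R[i],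
     phi = chistar (E_PON o0 t0 inv0 att p (chi phi)) ->
     \sum_(a : A0) (phi (AIn a))^* * Psi_inf (AIn a) = 0).
Proof.
move=> inv0K _ o0_inv _ p_range p_out _ nonrev cvg_Psi.
have p_gt0 a : 0 < p a by case/andP: (p_range a).
have Psi_fix := stationary_Uop_fix cvg_Psi.
have Psi_inflow0 : forall u, inflow t0 inv0 att p Psi_inf u = 0.
  apply: (nonreversible_balanced_eq0 o0_inv p_gt0 nonrev) => a.
  exact: Uop_fix_balanced (Psi_fix a) (Psi_fix _).
have Psi_anti a : Psi_inf (ainv inv0 a) = - Psi_inf a.
  exact: Uop_fix_antisym (Psi_fix a) (Psi_inflow0 _).
split; [by [] | split; [exact: Psi_inflow0 | split; [exact: Psi_anti |]]].
move=> phi phiE; have phi0 := PON_invariant_supported phiE.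
have phi_inflow0 : forall u, inflow t0 inv0 att p phi u = 0.
  apply: (nonreversible_balanced_eq0 o0_inv p_gt0 nonrev).
  exact: (PON_invariant_balanced inv0K o0_inv p_gt0 p_out phiE).
apply: (stationary_pairing_eq0 inv0K o0_inv p_gt0 cvg_Psi) => [b|v].
- by rewrite (Uop_fix_antisym inv0K o0_inv p_gt0 (PON_invariant_Uop_fix phiE b)) ?rmorphN.
- by rewrite (inflow0_conj _ _ _ (chi phi)) -(inflow_VIn _ _ att) // phi_inflow0 conjC0.
Qed.
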